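(* For any sets $X,Y$ and any $f:X\to\mathcal W(Y)$, the map $f^\dagger:\mathcal W(X)\to\mathcal W(Y)$ is a total function; that is, for every $m\in\mathcal W(X)$ the sums defining $f^\dagger(m)$ are defined and $f^\dagger(m)\in\mathcal W(Y)$.
   Context: $\mathcal A=\langle U,+,\cdot,\mathbf 0,\mathbf 1\rangle$ is a partial semiring ($+$ commutative, associative, possibly partial, unit $\mathbf 0$; $\cdot$ total, associative, unit $\mathbf 1$; two-sided distributivity; $\mathbf 0$ annihilates), naturally ordered ($u\le v$ iff $\exists w.\,u+w=v$ is a partial order), Scott continuous ($+$ and $\cdot$ preserve suprema of directed sets in each argument), with a top element. Infinite sums are suprema of finite partial sums. $\mathcal W(X)$ is the set of $m:X\to U$ whose support $\mathrm{supp}(m)=\{x:m(x)\ne\mathbf 0\}$ is countable and whose mass $|m|=\sum_{x\in\mathrm{supp}(m)}m(x)$ is defined. $f^\dagger(m)(y)=\sum_{x\in\mathrm{supp}(m)}m(x)\cdot f(x)(y)$. *)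

From Stdlib Require Import List.
Import ListNotations.
Set Implicit Arguments.

Record PSemiring := {
  car  : Type;
  padd : car -> car -> option car;
  mul  : car -> car -> car;
  zero : car;
  one  : car
}.

Section PSR.
Variable A : PSemiring.
Notation U := (car A).

Definition obind (o : option U) (k : U -> option U) : option U :=
  match o with Some v => k v | None => None end.

Definition le (u v : U) : Prop := exists w, padd A u w = Some v.

Definition directed (D : U -> Prop) : Prop :=
  (exists d, D d) /\
  (forall a b, D a -> D b -> exists c, D c /\ le a c /\ le b c).

Definition is_sup (D : U -> Prop) (s : U) : Prop :=
  (forall d, D d -> le d s) /\ (forall t, (forall d, D d -> le d t) -> le s t).

Record ContinuousPSR : Prop := {
  padd_comm : forall u v, padd A u v = padd A v u;
  padd_assoc : forall u v w,
      obind (padd A u v) (fun uv => padd A uv w)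
      = obind (padd A v w) (fun vw => padd A u vw);
  padd_0 : forall u, padd A u (zero A) = Some u;
  mul_assoc : forall u v w, mul A (mul A u v) w = mul A u (mul A v w);
  mul_1l : forall u, mul A (one A) u = u;
  mul_1r : forall u, mul A u (one A) = u;
  mul_Dr : forall w u v s, padd A u v = Some s ->
      padd A (mul A w u) (mul A w v) = Some (mul A w s);
  mul_Dl : forall w u v s, padd A u v = Some s ->
      padd A (mul A u w) (mul A v w) = Some (mul A s w);
  mul_0l : forall u, mul A (zero A) u = zero A;
  mul_0r : forall u, mul A u (zero A) = zero A;
  (* natural order is a partial order (reflexivity and transitivity follow
     from the unit and associativity laws; antisymmetry is the assumption) *)
  le_antisym : forall u v, le u v -> le v u -> u = v;
  dcpo : forall D, directed D -> exists s, is_sup D s;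
  padd_scott_r : forall D s u, directed D -> is_sup D s ->
      (forall d, D d -> exists v, padd A u d = Some v) ->
      exists us, padd A u s = Some us /\
        is_sup (fun e => exists d, D d /\ padd A u d = Some e) us;
  padd_scott_l : forall D s u, directed D -> is_sup D s ->
      (forall d, D d -> exists v, padd A d u = Some v) ->
      exists us, padd A s u = Some us /\
        is_sup (fun e => exists d, D d /\ padd A d u = Some e) us;
  mul_scott_r : forall D s u, directed D -> is_sup D s ->
      is_sup (fun e => exists d, D d /\ e = mul A u d) (mul A u s);
  mul_scott_l : forall D s u, directed D -> is_sup D s ->
      is_sup (fun e => exists d, D d /\ e = mul A d u) (mul A s u);
  has_top : exists t, forall u, le u t
}.

Fixpoint fsum (X : Type) (g : X -> U) (l : list X) : option U :=
  match l with
  | [] => Some (zero A)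
  | x :: l' => obind (fsum g l') (fun v => padd A (g x) v)
  end.

Definition countable (X : Type) (S : X -> Prop) : Prop :=
  exists e : nat -> option X, forall x, S x -> exists n, e n = Some x.

Definition finite_partial_sum (X : Type) (S : X -> Prop) (g : X -> U) (w : U) :=
  exists l, NoDup l /\ (forall x, In x l -> S x) /\ fsum g l = Some w.

Definition has_sum (X : Type) (S : X -> Prop) (g : X -> U) (v : U) : Prop :=
  (forall l, NoDup l -> (forall x, In x l -> S x) -> exists w, fsum g l = Some w)
  /\ is_sup (finite_partial_sum S g) v.

Definition supp (X : Type) (m : X -> U) : X -> Prop := fun x => m x <> zero A.

Definition inW (X : Type) (m : X -> U) : Prop :=
  countable (supp m) /\ exists v, has_sum (supp m) m v.

End PSR.

From Stdlib Require Import List Permutation Classical ClassicalEpsilon Cantor.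
Import ListNotations.

(* Since [f x y] lies below the top element [t], every finite partial sum of
   [x |-> m x * f x y] is dominated by the matching partial sum of [x |-> m x * t],
   which is a partial sum of [m] times [t]; so all of them are defined and, forming a
   directed set, have a supremum [f^dagger m y].  If [f^dagger m y <> 0] then
   [m x * f x y <> 0] for some [x], so the support of [f^dagger m] lies in the countable
   union of the supports of the [f x] over the support of [m].  For the mass, Scott
   continuity of [+] makes a finite sum over [y] of the suprema [f^dagger m y] the
   supremum of the double sums [sum_y sum_(x in l) m x * f x y]; exchanging the order of
   summation, these are [sum_(x in l) m x * sum_y f x y], defined by the same domination. *)

Set Implicit Arguments.
Unset Strict Implicit.

Definition decide (P : Prop) : bool :=
  if excluded_middle_informative P then true else false.

Lemma decideP (P : Prop) : Bool.reflect P (decide P).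
Proof. unfold decide; destruct excluded_middle_informative; constructor; assumption. Qed.

Definition odflt (T : Type) (d : T) (o : option T) : T :=
  match o with Some v => v | None => d end.

Lemma NoDup_incl_Permutation (X : Type) (l l' : list X) :
  NoDup l -> NoDup l' -> incl l l' ->
  Permutation l' (l ++ filter (fun x => negb (decide (In x l))) l').
Proof.
  intros Nl Nl' Hll'. apply NoDup_Permutation; [exact Nl' | |].
  - apply NoDup_app; [exact Nl | now apply NoDup_filter |].
    intros x Hx [_ Hr]%filter_In. now destruct (decideP (In x l)).
  - intros x. rewrite in_app_iff, filter_In.
    destruct (decideP (In x l)); simpl; intuition.
Qed.

Definition image (I U : Type) (D : I -> Prop) (F : I -> U) : U -> Prop :=
  fun e => exists i, D i /\ e = F i.

Definition directed_by (I : Type) (D : I -> Prop) (R : I -> I -> Prop) : Prop :=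
  (exists i, D i) /\ forall i j, D i -> D j -> exists k, D k /\ R i k /\ R j k.

Definition nodup_in (X : Type) (S : X -> Prop) (l : list X) : Prop :=
  NoDup l /\ forall x, In x l -> S x.

Lemma nodup_in_directed (X : Type) (S : X -> Prop) : directed_by (nodup_in S) (@incl X).
Proof.
  split; [exists []; split; [constructor | intros _ []]|].
  intros l1 l2 [_ S1] [_ S2].
  exists (nodup (fun x y => excluded_middle_informative (x = y)) (l1 ++ l2)).
  repeat split.
  - apply NoDup_nodup.
  - intros x Hx%nodup_In%in_app_iff. destruct Hx; auto.
  - intros x Hx. apply nodup_In, in_app_iff. auto.
  - intros x Hx. apply nodup_In, in_app_iff. auto.
Qed.

Lemma countable_subset (X : Type) (S T : X -> Prop) :
  (forall x, S x -> T x) -> countable T -> countable S.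
Proof. intros HST [e He]. exists e. auto. Qed.

Lemma countable_bigcup (X Y : Type) (S : X -> Prop) (T : X -> Y -> Prop) :
  countable S -> (forall x, S x -> countable (T x)) ->
  countable (fun y => exists x, S x /\ T x y).
Proof.
  intros [e He] HT.
  destruct (choice (fun x (E : nat -> option Y) =>
                      S x -> forall y, T x y -> exists n, E n = Some y)) as [E HE].
  { intros x. destruct (classic (S x)) as [Sx | nSx].
    - destruct (HT x Sx) as [E HE]. eauto.
    - exists (fun _ => None). tauto. }
  exists (fun n => let (a, b) := of_nat n in
                   match e a with Some x => E x b | None => None end).
  intros y [x [Sx Txy]].
  destruct (He x Sx) as [a Ha]. destruct (HE x Sx y Txy) as [b Hb].
  exists (to_nat (a, b)). now rewrite cancel_of_to, Ha.
Qed.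

Lemma is_sup_ext (A : PSemiring) (P Q : car A -> Prop) s :
  (forall e, P e <-> Q e) -> is_sup A P s -> is_sup A Q s.
Proof.
  intros HPQ [ub least]. split.
  - intros d Hd. apply ub, HPQ, Hd.
  - intros t Ht. apply least. intros d Hd. apply Ht, HPQ, Hd.
Qed.

Record PartialCommMonoid (A : PSemiring) : Prop := {
  pcm_comm : forall u v, padd A u v = padd A v u;
  pcm_assoc : forall u v w,
      obind A (padd A u v) (fun uv => padd A uv w)
      = obind A (padd A v w) (fun vw => padd A u vw);
  pcm_0 : forall u, padd A u (zero A) = Some u
}.

Lemma ContinuousPSR_pcm (A : PSemiring) : ContinuousPSR A -> PartialCommMonoid A.
Proof. intros HA; constructor; apply HA. Qed.

Section PartialCommMonoidTheory.

Variable A : PSemiring.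
Hypothesis HP : PartialCommMonoid A.
Local Notation U := (car A).

Lemma padd_0l u : padd A (zero A) u = Some u.
Proof. rewrite (pcm_comm HP). apply (pcm_0 HP). Qed.

Lemma padd_assoc_lr x y z xy w :
  padd A x y = Some xy -> padd A xy z = Some w ->
  exists yz, padd A y z = Some yz /\ padd A x yz = Some w.
Proof.
  intros Hxy Hw. generalize (pcm_assoc HP x y z).
  rewrite Hxy; simpl; rewrite Hw. destruct (padd A y z); simpl; [eauto | discriminate].
Qed.

Lemma padd_assoc_rl x y z yz w :
  padd A y z = Some yz -> padd A x yz = Some w ->
  exists xy, padd A x y = Some xy /\ padd A xy z = Some w.
Proof.
  intros Hyz Hw. generalize (pcm_assoc HP x y z).
  rewrite Hyz; simpl; rewrite Hw. destruct (padd A x y); simpl; [eauto | discriminate].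
Qed.

Lemma le_refl u : le A u u.
Proof. exists (zero A). apply (pcm_0 HP). Qed.

Lemma le_trans u v w : le A u v -> le A v w -> le A u w.
Proof.
  intros [a Ha] [b Hb]. destruct (padd_assoc_lr Ha Hb) as [c [_ Hc]]. now exists c.
Qed.

Lemma zero_le u : le A (zero A) u.
Proof. exists u. apply padd_0l. Qed.

Lemma padd_mono_l u u' v w' :
  le A u u' -> padd A u' v = Some w' -> exists w, padd A u v = Some w /\ le A w w'.
Proof.
  intros [a Ha] Hw'. destruct (padd_assoc_lr Ha Hw') as [av [Hav Hw]].
  rewrite (pcm_comm HP) in Hav.
  destruct (padd_assoc_rl Hav Hw) as [uv [Huv Hw2]].
  exists uv. split; [exact Huv | now exists a].
Qed.

Lemma padd_mono u u' v v' w' :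
  le A u u' -> le A v v' -> padd A u' v' = Some w' ->
  exists w, padd A u v = Some w /\ le A w w'.
Proof.
  intros Hu Hv Hw'. destruct (padd_mono_l Hu Hw') as [w1 [Hw1 Lw1]].
  rewrite (pcm_comm HP) in Hw1. destruct (padd_mono_l Hv Hw1) as [w [Hw Lw]].
  rewrite (pcm_comm HP) in Hw. exists w. split; [exact Hw | exact (le_trans Lw Lw1)].
Qed.

Lemma padd_interchange p q b1 b2 a1 a2 s :
  padd A p b1 = Some a1 -> padd A q b2 = Some a2 -> padd A a1 a2 = Some s ->
  exists u v, padd A p q = Some u /\ padd A b1 b2 = Some v /\ padd A u v = Some s.
Proof.
  intros H1 H2 H3.
  destruct (padd_assoc_lr H1 H3) as [e [He1 He2]].
  destruct (padd_assoc_rl H2 He1) as [bq [Hbq He]].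
  rewrite (pcm_comm HP) in Hbq.
  destruct (padd_assoc_lr Hbq He) as [v [Hv Hqv]].
  destruct (padd_assoc_rl Hqv He2) as [u [Hu Huv]].
  eauto.
Qed.

Lemma fsum_ext (X : Type) (g g' : X -> U) l :
  (forall x, In x l -> g x = g' x) -> fsum A g l = fsum A g' l.
Proof.
  induction l as [|a l IH]; intros Hgg'; [reflexivity|]. simpl.
  rewrite IH by (intros; apply Hgg'; simpl; auto).
  rewrite Hgg' by (simpl; auto). reflexivity.
Qed.

Lemma fsum_zero (X : Type) (g : X -> U) l :
  (forall x, In x l -> g x = zero A) -> fsum A g l = Some (zero A).
Proof.
  induction l as [|a l IH]; intros Hg; [reflexivity|]. simpl.
  rewrite IH by (intros; apply Hg; simpl; auto).
  rewrite Hg by (simpl; auto). apply (pcm_0 HP).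
Qed.

Lemma fsum_mono (X : Type) (g g' : X -> U) l s' :
  (forall x, In x l -> le A (g x) (g' x)) -> fsum A g' l = Some s' ->
  exists s, fsum A g l = Some s /\ le A s s'.
Proof.
  revert s'; induction l as [|a l IH]; intros s' Hgg' Hs'; simpl in Hs' |- *.
  - injection Hs' as <-. eauto using le_refl.
  - destruct (fsum A g' l) as [c|]; simpl in Hs'; [|discriminate].
    destruct (IH c) as [s0 [-> Ls0]]; [intros; apply Hgg'; simpl; auto | reflexivity |].
    exact (padd_mono (Hgg' a (or_introl eq_refl)) Ls0 Hs').
Qed.

Lemma fsum_app (X : Type) (g : X -> U) l1 l2 :
  fsum A g (l1 ++ l2) =
  obind A (fsum A g l1) (fun a => obind A (fsum A g l2) (fun b => padd A a b)).
Proof.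
  induction l1 as [|a l1 IH]; simpl.
  - destruct (fsum A g l2); simpl; [symmetry; apply padd_0l | reflexivity].
  - rewrite IH. destruct (fsum A g l1) as [p|]; simpl; [|reflexivity].
    destruct (fsum A g l2) as [q|]; simpl.
    + symmetry. apply (pcm_assoc HP).
    + destruct (padd A (g a) p); reflexivity.
Qed.

Lemma fsum_perm (X : Type) (g : X -> U) l l' : Permutation l l' -> fsum A g l = fsum A g l'.
Proof.
  induction 1 as [| |x y l|]; simpl; try congruence.
  destruct (fsum A g l) as [v|]; simpl; [|reflexivity].
  generalize (pcm_assoc HP (g y) (g x) v) (pcm_assoc HP (g x) (g y) v).
  rewrite (pcm_comm HP (g x) (g y)). simpl. congruence.
Qed.

Lemma fsum_incl (X : Type) (g : X -> U) l l' s' :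
  NoDup l -> NoDup l' -> incl l l' -> fsum A g l' = Some s' ->
  exists s, fsum A g l = Some s /\ le A s s'.
Proof.
  intros Nl Nl' Hll' Hs'.
  rewrite (fsum_perm g (NoDup_incl_Permutation Nl Nl' Hll')), fsum_app in Hs'.
  destruct (fsum A g l) as [s|]; simpl in Hs'; [|discriminate].
  destruct (fsum A g _) as [b|]; simpl in Hs'; [|discriminate].
  exists s. split; [reflexivity | now exists b].
Qed.

Lemma fsum_filter_supp (X : Type) (g : X -> U) l :
  fsum A g l = fsum A g (filter (fun x => decide (supp A g x)) l).
Proof.
  induction l as [|a l IH]; [reflexivity|]. simpl. rewrite IH.
  destruct (decideP (supp A g a)) as [Ha|Ha]; [reflexivity|].
  apply NNPP in Ha. rewrite Ha.
  destruct (fsum A g (filter _ l)); simpl; [apply padd_0l | reflexivity].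
Qed.

Lemma fsum_add (Y : Type) (g1 g2 : Y -> U) L a1 a2 s :
  fsum A g1 L = Some a1 -> fsum A g2 L = Some a2 -> padd A a1 a2 = Some s ->
  (forall y, In y L -> exists v, padd A (g1 y) (g2 y) = Some v) /\
  fsum A (fun y => odflt (zero A) (padd A (g1 y) (g2 y))) L = Some s.
Proof.
  revert a1 a2 s; induction L as [|y L IH]; intros a1 a2 s H1 H2 H3; simpl in H1, H2 |- *.
  - injection H1 as <-. injection H2 as <-. rewrite (pcm_0 HP) in H3.
    split; [intros _ [] | exact H3].
  - destruct (fsum A g1 L) as [b1|]; simpl in H1; [|discriminate].
    destruct (fsum A g2 L) as [b2|]; simpl in H2; [|discriminate].
    destruct (padd_interchange H1 H2 H3) as [u [v [Hu [Hv Huv]]]].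
    destruct (IH b1 b2 v eq_refl eq_refl Hv) as [IHdef IHsum].
    split.
    + intros z [<- | Hz]; eauto.
    + rewrite IHsum, Hu. exact Huv.
Qed.

Lemma fsum_comm (X Y : Type) (G : X -> Y -> U) (r : X -> U) l L s :
  (forall x, In x l -> fsum A (G x) L = Some (r x)) -> fsum A r l = Some s ->
  exists c, (forall y, In y L -> fsum A (fun x => G x y) l = Some (c y)) /\
            fsum A c L = Some s.
Proof.
  revert s; induction l as [|a l IH]; intros s Hr Hs; simpl in Hs.
  - injection Hs as <-. exists (fun _ => zero A).
    split; [reflexivity | now apply fsum_zero].
  - destruct (fsum A r l) as [s0|]; simpl in Hs; [|discriminate].
    destruct (IH s0) as [c0 [Hc0 Hsum0]]; [intros; apply Hr; simpl; auto | reflexivity |].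
    destruct (fsum_add (Hr a (or_introl eq_refl)) Hsum0 Hs) as [Hdef Hsum].
    eexists. split; [|exact Hsum].
    intros y Hy. simpl. rewrite Hc0 by exact Hy. simpl.
    destruct (Hdef y Hy) as [v ->]. reflexivity.
Qed.

End PartialCommMonoidTheory.

Section ContinuousTheory.

Variable A : PSemiring.
Hypothesis HA : ContinuousPSR A.
Let HP := ContinuousPSR_pcm HA.
Local Notation U := (car A).

Lemma mul_mono_l w u u' : le A u u' -> le A (mul A w u) (mul A w u').
Proof. intros [a Ha]. exists (mul A w a). now apply (mul_Dr HA). Qed.

Lemma fsum_mulr (X : Type) (g : X -> U) l s c :
  fsum A g l = Some s -> fsum A (fun x => mul A (g x) c) l = Some (mul A s c).
Proof.
  revert s; induction l as [|a l IH]; intros s Hs; simpl in Hs |- *.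
  - injection Hs as <-. now rewrite (mul_0l HA).
  - destruct (fsum A g l) as [s0|]; simpl in Hs; [|discriminate].
    rewrite (IH s0 eq_refl). simpl. now apply (mul_Dl HA).
Qed.

Lemma fsum_mull (X : Type) (g : X -> U) l s c :
  fsum A g l = Some s -> fsum A (fun x => mul A c (g x)) l = Some (mul A c s).
Proof.
  revert s; induction l as [|a l IH]; intros s Hs; simpl in Hs |- *.
  - injection Hs as <-. now rewrite (mul_0r HA).
  - destruct (fsum A g l) as [s0|]; simpl in Hs; [|discriminate].
    rewrite (IH s0 eq_refl). simpl. now apply (mul_Dr HA).
Qed.

Lemma fsum_mul_defined (X : Type) (m c : X -> U) l w :
  fsum A m l = Some w -> exists w', fsum A (fun x => mul A (m x) (c x)) l = Some w'.
Proof.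
  intros Hw. destruct (has_top HA) as [t Ht].
  destruct (fsum_mono HP (g := fun x => mul A (m x) (c x))
              (fun x _ => mul_mono_l (m x) (Ht (c x))) (fsum_mulr t Hw)) as [w' [Hw' _]].
  eauto.
Qed.

Definition monotone_on (I : Type) (D : I -> Prop) (R : I -> I -> Prop) (F : I -> U)
  : Prop :=
  forall i j, D i -> D j -> R i j -> le A (F i) (F j).

Section DirectedSuprema.

Variables (I : Type) (D : I -> Prop) (R : I -> I -> Prop).
Hypothesis D_directed : directed_by D R.

Lemma directed_image (F : I -> U) : monotone_on D R F -> directed A (image D F).
Proof.
  intros mF. destruct D_directed as [[i0 Di0] Dup].
  split; [exists (F i0), i0; auto|].
  intros a b [i [Di ->]] [j [Dj ->]]. destruct (Dup i j Di Dj) as [k [Dk [Rik Rjk]]].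
  exists (F k). split; [exists k; auto | split; apply mF; auto].
Qed.

(* [a + b] and the supremum of the [F i + G i] both equal [sup_j sup_i (F i + G j)]:
   Scott continuity of [+] in each argument gives the two suprema, and directedness
   bounds each [F i + G j] by a diagonal term [F k + G k]. *)
Lemma padd_sup (F G : I -> U) a b :
  monotone_on D R F -> monotone_on D R G ->
  is_sup A (image D F) a -> is_sup A (image D G) b ->
  (forall i, D i -> exists v, padd A (F i) (G i) = Some v) ->
  exists s, padd A a b = Some s /\
            is_sup A (fun e => exists i, D i /\ padd A (F i) (G i) = Some e) s.
Proof.
  intros mF mG supF supG defFG. destruct D_directed as [_ Dup].
  assert (cross : forall i j, D i -> D j -> exists k v w,
             D k /\ padd A (F i) (G j) = Some v /\ padd A (F k) (G k) = Some w /\ le A v w).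
  { intros i j Di Dj. destruct (Dup i j Di Dj) as [k [Dk [Rik Rjk]]].
    destruct (defFG k Dk) as [w Hw].
    destruct (padd_mono HP (mF i k Di Dk Rik) (mG j k Dj Dk Rjk) Hw) as [v [Hv Lvw]].
    exists k, v, w. auto. }
  assert (rows : forall j, D j -> exists aj, padd A a (G j) = Some aj /\
            is_sup A (fun e => exists d, image D F d /\ padd A d (G j) = Some e) aj).
  { intros j Dj. apply (padd_scott_l HA); [exact (directed_image mF) | exact supF |].
    intros d [i [Di ->]]. destruct (cross i j Di Dj) as (k & v & _ & _ & Hv & _). eauto. }
  destruct (padd_scott_r HA a (directed_image mG) supG) as [s [Hs [ub least]]].
  { intros d [j [Dj ->]]. destruct (rows j Dj) as [aj [Haj _]]. eauto. }
  exists s. split; [exact Hs|]. split.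
  - intros e [i [Di He]]. destruct (rows i Di) as [ai [Hai [ubi _]]].
    apply (le_trans HP) with ai.
    + apply ubi. exists (F i). split; [exists i; auto | exact He].
    + apply ub. exists (G i). split; [exists i; auto | exact Hai].
  - intros t Ht. apply least. intros e [d [[j [Dj ->]] He]].
    destruct (rows j Dj) as [aj [Haj [_ leastj]]].
    rewrite He in Haj. injection Haj as <-.
    apply leastj. intros e' [d' [[i [Di ->]] He']].
    destruct (cross i j Di Dj) as (k & v & w & Dk & Hv & Hw & Lvw).
    rewrite He' in Hv. injection Hv as <-.
    apply (le_trans HP) with w; [exact Lvw | apply Ht; eauto].
Qed.

Lemma fsum_sup (Y : Type) (F : I -> Y -> U) (h : Y -> U) :
  (forall y, monotone_on D R (fun i => F i y)) ->
  (forall y, is_sup A (image D (fun i => F i y)) (h y)) ->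
  forall L, (forall i, D i -> exists w, fsum A (F i) L = Some w) ->
  exists s, fsum A h L = Some s /\
            is_sup A (fun e => exists i, D i /\ fsum A (F i) L = Some e) s.
Proof.
  intros mF supF. induction L as [|y L IH]; intros defL; simpl.
  - exists (zero A). split; [reflexivity|]. destruct D_directed as [[i Di] _]. split.
    + intros e [j [_ He]]. injection He as <-. apply (le_refl HP).
    + intros t Ht. apply Ht. exists i. auto.
  - set (G := fun i => odflt (zero A) (fsum A (F i) L)).
    assert (HG : forall i, D i -> fsum A (F i) L = Some (G i)).
    { intros i Di. destruct (defL i Di) as [w Hw]. simpl in Hw. unfold G.
      destruct (fsum A (F i) L); [reflexivity | discriminate]. }
    destruct IH as [sL [HsL supL]]; [intros i Di; rewrite (HG i Di); eauto|].
    assert (mG : monotone_on D R G).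
    { intros i j Di Dj Rij.
      destruct (fsum_mono HP (g := F i) (fun x _ => mF x i j Di Dj Rij) (HG j Dj))
        as [s [Hs Ls]].
      rewrite (HG i Di) in Hs. injection Hs as ->. exact Ls. }
    assert (supG : is_sup A (image D G) sL).
    { apply is_sup_ext with (2 := supL). intros e. split.
      - intros [i [Di He]]. exists i. split; [exact Di|]. rewrite (HG i Di) in He. congruence.
      - intros [i [Di ->]]. eauto. }
    destruct (padd_sup (mF y) mG (supF y) supG) as [s [Hs supS]].
    { intros i Di. destruct (defL i Di) as [w Hw]. simpl in Hw.
      rewrite (HG i Di) in Hw. eauto. }
    exists s. rewrite HsL. split; [exact Hs|].
    apply is_sup_ext with (2 := supS). intros e.
    split; intros [i [Di He]]; exists i; rewrite (HG i Di) in *; auto.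
Qed.

End DirectedSuprema.

Definition summable (X : Type) (S : X -> Prop) (g : X -> U) : Prop :=
  forall l, NoDup l -> (forall x, In x l -> S x) -> exists w, fsum A g l = Some w.

Lemma partial_sums_monotone (X : Type) (S : X -> Prop) (g : X -> U) :
  summable S g -> monotone_on (nodup_in S) (@incl X) (fun l => odflt (zero A) (fsum A g l)).
Proof.
  intros Hg l l' [Nl _] [Nl' Sl'] Hll'.
  destruct (Hg l' Nl' Sl') as [s' Hs']. destruct (fsum_incl HP Nl Nl' Hll' Hs') as [s [Hs Ls]].
  rewrite Hs, Hs'. exact Ls.
Qed.

Lemma finite_partial_sum_image (X : Type) (S : X -> Prop) (g : X -> U) :
  summable S g -> forall e,
  finite_partial_sum A S g e <-> image (nodup_in S) (fun l => odflt (zero A) (fsum A g l)) e.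
Proof.
  intros Hg e. split.
  - intros [l [Nl [Sl Hl]]]. exists l. split; [split; assumption|]. now rewrite Hl.
  - intros [l [[Nl Sl] ->]]. exists l. repeat split; auto.
    destruct (Hg l Nl Sl) as [w Hw]. now rewrite Hw.
Qed.

Lemma summable_has_sum (X : Type) (S : X -> Prop) (g : X -> U) :
  summable S g -> exists v, has_sum A S g v.
Proof.
  intros Hg.
  destruct (dcpo HA (directed_image (nodup_in_directed S) (partial_sums_monotone Hg)))
    as [v Hv].
  exists v. split; [exact Hg|]. apply is_sup_ext with (2 := Hv).
  intros e. symmetry. apply finite_partial_sum_image, Hg.
Qed.

Lemma has_sum_nonzero (X : Type) (S : X -> Prop) (g : X -> U) v :
  has_sum A S g v -> v <> zero A -> exists x, S x /\ g x <> zero A.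
Proof.
  intros [_ [_ least]] Hv. apply NNPP. intros Hnone.
  apply Hv, (le_antisym HA); [|apply (zero_le HP)].
  apply least. intros d [l [_ [Sl Hl]]].
  rewrite (fsum_zero HP (g := g) (l := l)) in Hl.
  - injection Hl as <-. apply (le_refl HP).
  - intros x Hx. apply NNPP. intros Hgx. apply Hnone. exists x. auto.
Qed.

Lemma inW_fsum_defined (X : Type) (g : X -> U) :
  inW A g -> forall L, NoDup L -> exists w, fsum A g L = Some w.
Proof.
  intros [_ [_ [Hg _]]] L NL. rewrite (fsum_filter_supp HP). apply Hg.
  - now apply NoDup_filter.
  - intros x [_ Hx]%filter_In. now destruct (decideP (supp A g x)).
Qed.

End ContinuousTheory.

Section Kleisli.

Variable A : PSemiring.
Hypothesis HA : ContinuousPSR A.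
Let HP := ContinuousPSR_pcm HA.
Variables (X Y : Type) (f : X -> Y -> car A) (m : X -> car A).
Hypotheses (hf : forall x, inW A (f x)) (hm : inW A m).

Let g (y : Y) (x : X) := mul A (m x) (f x y).

Lemma kleisli_summable y : summable (supp A m) (g y).
Proof.
  intros l Nl Sl. destruct hm as [_ [_ [Mdef _]]]. destruct (Mdef l Nl Sl) as [w Hw].
  exact (fsum_mul_defined HA (fun x => f x y) Hw).
Qed.

(* Exchanging the order of summation gives [sum_(x in l) m x * sum_(y in L) f x y]. *)
Lemma kleisli_double_sum_defined l L :
  nodup_in (supp A m) l -> NoDup L ->
  exists w, fsum A (fun y => odflt (zero A) (fsum A (g y) l)) L = Some w.
Proof.
  intros [Nl Sl] NL.
  set (r := fun x => odflt (zero A) (fsum A (f x) L)).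
  assert (Hr : forall x, fsum A (f x) L = Some (r x)).
  { intros x. destruct (inW_fsum_defined HA (hf x) NL) as [w Hw]. unfold r. now rewrite Hw. }
  destruct hm as [_ [_ [Mdef _]]]. destruct (Mdef l Nl Sl) as [w0 Hw0].
  destruct (fsum_mul_defined HA r Hw0) as [w Hw].
  destruct (fsum_comm HP (G := fun x y => g y x) (fun x _ => fsum_mull HA (m x) (Hr x)) Hw)
    as [c [Hc Hsum]].
  exists w. rewrite <- Hsum. apply fsum_ext. intros y Hy. exact (f_equal _ (Hc y Hy)).
Qed.

Variable h : Y -> car A.
Hypothesis hh : forall y, has_sum A (supp A m) (g y) (h y).

Lemma kleisli_supp_countable : countable (supp A h).
Proof.
  apply countable_subset with (T := fun y => exists x, supp A m x /\ supp A (f x) y).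
  - intros y Hy. destruct (has_sum_nonzero HA (hh y) Hy) as [x [Sx Hx]].
    exists x. split; [exact Sx|]. intros Hz. apply Hx. unfold g. rewrite Hz. apply (mul_0r HA).
  - apply countable_bigcup; [exact (proj1 hm) | intros x _; exact (proj1 (hf x))].
Qed.

Lemma kleisli_fsum_defined L : NoDup L -> exists s, fsum A h L = Some s.
Proof.
  intros NL.
  assert (supF : forall y, is_sup A (image (nodup_in (supp A m))
                                       (fun l => odflt (zero A) (fsum A (g y) l))) (h y)).
  { intros y. apply is_sup_ext with (2 := proj2 (hh y)).
    apply finite_partial_sum_image, kleisli_summable. }
  destruct (fsum_sup HA (nodup_in_directed (supp A m))
              (fun y => partial_sums_monotone HA (kleisli_summable y)) supF
              (fun l Hl => kleisli_double_sum_defined Hl NL)) as [s [Hs _]].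
  eauto.
Qed.

Lemma kleisli_inW : inW A h.
Proof.
  split; [exact kleisli_supp_countable|].
  apply (summable_has_sum HA). intros L NL _. exact (kleisli_fsum_defined NL).
Qed.

End Kleisli.

Theorem lemmaA3 (A : PSemiring) (HA : ContinuousPSR A)
  (X Y : Type) (f : X -> Y -> car A) (hf : forall x, inW A (f x))
  (m : X -> car A) (hm : inW A m) :
  exists h : Y -> car A,
    (forall y, has_sum A (supp A m) (fun x => mul A (m x) (f x y)) (h y))
    /\ inW A h.
Proof.
  destruct (choice (fun y v => has_sum A (supp A m) (fun x => mul A (m x) (f x y)) v))
    as [h hh].
  { intros y. exact (summable_has_sum HA (kleisli_summable HA f hm y)). }
  exists h. split; [exact hh | exact (kleisli_inW HA hf hm hh)].
Qed.
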